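(* Let $R$ be a commutative domain, $B=R(t,\sigma,H,J)$, $M$ an $R$-weight $B$-module, and $\mathfrak m\in\operatorname{Maxspec}(R)$ with $\sigma(\mathfrak m)\notin\mathcal S(B)$. Then: (1) for all $j\in J\setminus\sigma(\mathfrak m)$ and $h\in H\setminus\sigma(\mathfrak m)$, the $R/\mathfrak m$-linear maps $M_{\mathfrak m}\to M_{\sigma(\mathfrak m)}$, $v\mapsto (jt)v$, and $M_{\sigma(\mathfrak m)}\to M_{\mathfrak m}$, $v\mapsto(\sigma^{-1}(h)t^{-1})v$, are injective; (2) $\dim_{R/\mathfrak m}M_{\mathfrak m}=\dim_{R/\sigma(\mathfrak m)}M_{\sigma(\mathfrak m)}$.
   Context: $\Bbbk$ is a field; all algebras are associative unital $\Bbbk$-algebras. For an algebra $R$ and $\sigma\in\operatorname{Aut}_\Bbbk(R)$, $R[t,t^{-1};\sigma]$ is the skew Laurent ring: generated over $R$ by $t,t^{-1}$ with $tt^{-1}=t^{-1}t=1$ and $t^{\pm1}r=\sigma^{\pm1}(r)t^{\pm1}$ for $r\in R$. Given two-sided ideals $H,J$ of $R$, set $I^{(0)}=R$, $I^{(n)}=J\sigma(J)\cdots\sigma^{n-1}(J)$ for $n\ge1$, and $I^{(n)}=\sigma^{-1}(H)\sigma^{-2}(H)\cdots\sigma^{n}(H)$ for $n\le-1$; it is assumed throughout that $I^{(n)}\neq0$ for all $n\in\mathbb Z$. The Bell–Rogalski (BR) algebra is $R(t,\sigma,H,J)=\bigoplus_{n\in\mathbb Z}I^{(n)}t^n\subseteq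 R[t,t^{-1};\sigma]$; write $B_n=I^{(n)}t^n$. For $R$ commutative, $\mathcal S(B)=\{\mathfrak p\in\operatorname{Spec}(R):\mathfrak p\supseteq HJ\}$. For $R$ a commutative domain, a left $B$-module $M$ is an $R$-weight module if $M=\bigoplus_{\mathfrak m\in\operatorname{Maxspec}(R)}M_{\mathfrak m}$ where $M_{\mathfrak m}=\{v\in M:\mathfrak m v=0\}$ and $\dim_{R/\mathfrak m}M_{\mathfrak m}<\infty$ for all $\mathfrak m$. Note $B_k M_{\mathfrak m}\subseteq M_{\sigma^k(\mathfrak m)}$; $M_{\sigma(\mathfrak m)}$ is regarded as an $R/\mathfrak m$-vector space via the field isomorphism $R/\mathfrak m\to R/\sigma(\mathfrak m)$ induced by $\sigma$. *)

From mathcomp Require Import all_boot all_order all_algebra.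
Set Implicit Arguments. Unset Strict Implicit. Unset Printing Implicit Defensive.
Import GRing.Theory.
Local Open Scope ring_scope.

Section BR.
Variable R : comNzRingType.

Definition is_ideal (I : R -> Prop) : Prop :=
  [/\ I 0, (forall x y, I x -> I y -> I (x + y)) & (forall r x, I x -> I (r * x))].

Definition is_prime_ideal (P : R -> Prop) : Prop :=
  [/\ is_ideal P, ~ P 1 & (forall x y, P (x * y) -> P x \/ P y)].

Definition is_max_ideal (P : R -> Prop) : Prop :=
  [/\ is_ideal P, ~ P 1 &
      (forall I, is_ideal I -> (forall x, P x -> I x) ->
                 (forall x, I x -> P x) \/ I 1)].

Definition same_ideal (I1 I2 : R -> Prop) : Prop := forall x, I1 x <-> I2 x.

Definition idprod (I J : R -> Prop) : R -> Prop :=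
  fun x => exists n (a b : 'I_n -> R),
    (forall i, I (a i) /\ J (b i)) /\ x = \sum_(i < n) a i * b i.

Fixpoint idprods (l : seq (R -> Prop)) : R -> Prop :=
  match l with
  | [::] => fun _ => True
  | [:: Q] => Q
  | Q :: l' => idprod Q (idprods l')
  end.

Variables (sigma : R -> R) (sigmai : R -> R).
(* sigma is a ring automorphism with inverse sigmai (hypotheses in the theorem). *)

Definition spow (k : int) (x : R) : R :=
  match k with
  | Posz n => iter n sigma x
  | Negz n => iter n.+1 sigmai x
  end.

Definition imgp (k : int) (I : R -> Prop) : R -> Prop :=
  fun x => I (spow (- k) x).

Variables (H J : R -> Prop).

Definition Ipow (n : int) : R -> Prop :=
  match n with
  | Posz 0 => fun _ => True
  | Posz k.+1 => idprods [seq imgp (Posz i) J | i <- iota 0 k.+1]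
  | Negz k => idprods [seq imgp (- (Posz i.+1)) H | i <- iota 0 k.+1]
  end.

Definition inSB (P : R -> Prop) : Prop :=
  is_prime_ideal P /\ (forall x, idprod H J x -> P x).

Variable M : zmodType.
(* A left B-module structure on M, B = (+)_n I^(n) t^n, given by the action of
   homogeneous elements:  act n r v  =  (r t^n) v   for r in I^(n)
   (values for r outside I^(n) are irrelevant). *)
Definition is_BR_module (act : int -> R -> M -> M) : Prop :=
  [/\ (forall n r v w, Ipow n r -> act n r (v + w) = act n r v + act n r w),
      (forall n r s v, Ipow n r -> Ipow n s -> act n (r + s) v = act n r v + act n s v),
      (forall v, act 0 1 v = v) &
      (forall n m r s v, Ipow n r -> Ipow m s ->
          act n r (act m s v) = act (n + m) (r * spow n s) v)].

Variable act : int -> R -> M -> M.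

Definition wsp (P : R -> Prop) (v : M) : Prop := forall r, P r -> act 0 r v = 0.

(* M_m has dimension n over R/m: a basis b_1..b_n of M_m, i.e. spanning
   with coefficients in R and linearly independent modulo m. *)
Definition has_basis (P : R -> Prop) (n : nat) : Prop :=
  exists b : 'I_n -> M,
    [/\ (forall i, wsp P (b i)),
        (forall v, wsp P v -> exists c : 'I_n -> R, v = \sum_(i < n) act 0 (c i) (b i)) &
        (forall c : 'I_n -> R, \sum_(i < n) act 0 (c i) (b i) = 0 -> forall i, P (c i))].

Definition weight_module : Prop :=
  [/\
      (forall v, exists n (ms : 'I_n -> R -> Prop) (vs : 'I_n -> M),
          [/\ (forall i, is_max_ideal (ms i) /\ wsp (ms i) (vs i)),
              (forall i j, i != j -> ~ same_ideal (ms i) (ms j)) &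
              v = \sum_(i < n) vs i]),
      (forall n (ms : 'I_n -> R -> Prop) (vs : 'I_n -> M),
          (forall i, is_max_ideal (ms i) /\ wsp (ms i) (vs i)) ->
          (forall i j, i != j -> ~ same_ideal (ms i) (ms j)) ->
          \sum_(i < n) vs i = 0 -> forall i, vs i = 0) &
      (forall P, is_max_ideal P -> exists n, has_basis P n)].

End BR.

From mathcomp Require Import all_boot all_order all_algebra.
From Stdlib Require Import Classical.
From mathcomp Require Import ring.
Set Implicit Arguments. Unset Strict Implicit.
Import GRing.Theory.
Local Open Scope ring_scope.

(* Since sigma(m) is prime and does not contain HJ, it misses some product h j
   with h in H and j in J.  Then (sigma^-1(h) t^-1)(j t) = sigma^-1(h j) is a
   scalar outside m, hence invertible modulo m, so it acts injectively on M_m;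
   symmetrically (j t)(sigma^-1(h) t^-1) = h j acts injectively on
   M_sigma(m).  Left multiplication by j t and by sigma^-1(h) t^-1 is therefore
   injective between the two weight spaces, and both maps are semilinear along
   sigma, so they carry independent families modulo one ideal to independent
   families modulo the other.  Gaussian elimination modulo a maximal ideal
   bounds the size of an independent family by that of a basis, which gives
   the two inequalities between the dimensions. *)

Section Ideals.
Variables (R : comNzRingType) (P : R -> Prop).
Hypothesis HP : is_ideal P.

Lemma mem_ideal0 : P 0. Proof. by case: HP. Qed.

Lemma mem_idealD x y : P x -> P y -> P (x + y).
Proof. by case: HP => _ + _; apply. Qed.

Lemma mem_idealMl r x : P x -> P (r * x).
Proof. by case: HP => _ _; apply. Qed.

Lemma mem_idealMr r x : P x -> P (x * r).
Proof. by rewrite mulrC; apply: mem_idealMl. Qed.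

Lemma mem_ideal_sum (I : eqType) (s : seq I) (F : I -> R) :
  (forall i, i \in s -> P (F i)) -> P (\sum_(i <- s) F i).
Proof.
elim: s => [|a s IH] PF; first by rewrite big_nil; apply: mem_ideal0.
rewrite big_cons; apply: mem_idealD; first by apply: PF; rewrite mem_head.
by apply: IH => i si; apply: PF; rewrite in_cons si orbT.
Qed.

Lemma idprod_sub (A B : R -> Prop) :
  (forall a b, A a -> B b -> P (a * b)) -> forall x, idprod A B x -> P x.
Proof.
move=> PAB x [n [a [b [ABab ->]]]].
by apply: mem_ideal_sum => i _; case: (ABab i); apply: PAB.
Qed.

(* Eliminating the pivot unknown i0 of equation n with r an inverse of its
   coefficient modulo P: a solution of the reduced system on the remaining
   unknowns extends to a solution of the first n + 1 equations. *)
Lemma extend_solution_pivot (I : eqType) (A : I -> nat -> R) (S : seq I) i0 n r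
    (c : I -> R) :
  uniq S -> i0 \in S -> P (1 - r * A i0 n) ->
  (forall k, (k < n)%N ->
     P (\sum_(i <- rem i0 S) c i * (A i k - A i n * r * A i0 k))) ->
  forall k, (k <= n)%N ->
    P (\sum_(i <- S)
         (if i == i0 then - ((\sum_(j <- rem i0 S) c j * A j n) * r) else c i) * A i k).
Proof.
move=> uS i0S Pr Pc k kn.
set s := \sum_(j <- rem i0 S) c j * A j n.
rewrite (perm_big _ (perm_to_rem i0S)) big_cons eqxx /=.
rewrite (eq_big_seq (fun i => c i * A i k)); last first.
  by move=> i; rewrite mem_rem_uniq // => /andP[/negbTE ->].
case: ltngtP kn => // [kn _|-> _].
- have := Pc k kn; congr P.
  rewrite /s mulNr !mulr_suml -sumrN -big_split /=.
  by apply: eq_bigr => i _; ring.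
- have -> : - (s * r) * A i0 n + s = s * (1 - r * A i0 n) by ring.
  exact: mem_idealMl.
Qed.

End Ideals.

Section MaxIdeal.
Variables (R : comNzRingType) (P : R -> Prop).
Hypothesis HP : is_max_ideal P.

Lemma max_ideal_ideal : is_ideal P. Proof. by case: HP. Qed.

Lemma max_ideal_not1 : ~ P 1. Proof. by case: HP. Qed.

(* Maximality applied to the ideal P + R c. *)
Lemma max_ideal_inv c : ~ P c -> exists p r, P p /\ 1 = p + r * c.
Proof.
move=> Pc; have HI := max_ideal_ideal.
pose I y := exists p r, P p /\ y = p + r * c.
have II : is_ideal I.
  split.
  - by exists 0, 0; rewrite mul0r addr0; split; first exact: (mem_ideal0 HI).
  - move=> _ _ [p [r [Pp ->]]] [p' [r' [Pp' ->]]].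
    exists (p + p'), (r + r'); rewrite mulrDl addrACA.
    by split; first exact: (mem_idealD HI).
  - move=> s _ [p [r [Pp ->]]].
    exists (s * p), (s * r); rewrite mulrDr mulrA.
    by split; first exact: (mem_idealMl HI).
have PI x : P x -> I x by exists x, 0; rewrite mul0r addr0.
case: HP => _ _ /(_ I II PI) [IP|//].
case: Pc; apply: IP; exists 0, 1; rewrite mul1r add0r.
by split; first exact: (mem_ideal0 HI).
Qed.

Lemma max_ideal_prime x y : P (x * y) -> P x \/ P y.
Proof.
move=> Pxy; have HI := max_ideal_ideal.
case: (classic (P x)) => Px; [by left | right].
have [p [r [Pp e]]] := max_ideal_inv Px.
rewrite -[y]mul1r e mulrDl -mulrA.
by apply: (mem_idealD HI); [apply: (mem_idealMr HI) | apply: (mem_idealMl HI)].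
Qed.

Lemma max_ideal_is_prime : is_prime_ideal P.
Proof.
by split; [exact: max_ideal_ideal | exact: max_ideal_not1 | exact: max_ideal_prime].
Qed.

Lemma max_ideal_nontrivial_solution (I : eqType) n (A : I -> nat -> R) (S : seq I) :
  uniq S -> (n < size S)%N ->
  exists c : I -> R, (exists2 i, i \in S & ~ P (c i)) /\
    forall k, (k < n)%N -> P (\sum_(i <- S) c i * A i k).
Proof.
have HI := max_ideal_ideal.
elim: n A S => [|n IH] A S uS szS.
  case: S uS szS => [//|i0 S] _ _.
  exists (fun i => if i == i0 then 1 else 0); split => //.
  by exists i0; rewrite ?mem_head ?eqxx //; apply: max_ideal_not1.
case: (classic (exists2 i, i \in S & ~ P (A i n))) => [[i0 i0S Pi0]|allP].
  have [p [r [Pp e]]] := max_ideal_inv Pi0.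
  have Pr : P (1 - r * A i0 n) by rewrite e addrK.
  pose A' i k := A i k - A i n * r * A i0 k.
  have szS' : (n < size (rem i0 S))%N.
    by rewrite size_rem //; case: (size S) szS.
  have [c [[i1 i1S Pc1] Pc]] := IH A' _ (rem_uniq i0 uS) szS'.
  move: i1S; rewrite mem_rem_uniq // => /andP[i1i0 i1S].
  eexists; split; last first.
    by move=> k; rewrite ltnS; apply: (extend_solution_pivot HI uS i0S Pr Pc).
  by exists i1; rewrite // (negbTE i1i0).
have [c [c0 Pc]] := IH A S uS (ltnW szS).
exists c; split => // k; rewrite ltnS leq_eqVlt => /predU1P[->|]; last exact: Pc.
apply: (mem_ideal_sum HI) => i iS; apply: (mem_idealMl HI).
by apply: NNPP => Pi; apply: allP; exists i.
Qed.

Lemma max_ideal_not_inSB (H J : R -> Prop) :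
  ~ inSB H J P -> exists h j, [/\ H h, J j & ~ P (h * j)].
Proof.
move=> PHJ; apply: NNPP => noHJ; apply: PHJ; split; first exact: max_ideal_is_prime.
apply: (idprod_sub max_ideal_ideal) => h j Hh Jj.
by apply: NNPP => Phj; apply: noHJ; exists h, j.
Qed.

End MaxIdeal.

Lemma max_ideal_preim (R S : comNzRingType) (f : {rmorphism S -> R}) (g : R -> S)
    (P : S -> Prop) :
  cancel f g -> cancel g f -> is_max_ideal P -> is_max_ideal (fun x => P (g x)).
Proof.
move=> fK gK [HI P1 Pmax].
have gD x y : g (x + y) = g x + g y by rewrite -[x]gK -[y]gK -rmorphD !fK.
have gM x y : g (x * y) = g x * g y by rewrite -[x]gK -[y]gK -rmorphM !fK.
split.
- split; first by rewrite -(rmorph0 f) fK; apply: (mem_ideal0 HI).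
  + by move=> x y Px Py; rewrite gD; apply: (mem_idealD HI).
  + by move=> r x Px; rewrite gM; apply: (mem_idealMl HI).
- by rewrite -(rmorph1 f) fK.
- move=> I II PI.
  have IfI : is_ideal (fun x => I (f x)).
    split; first by rewrite rmorph0; apply: (mem_ideal0 II).
    + by move=> x y Ix Iy; rewrite rmorphD; apply: (mem_idealD II).
    + by move=> r x Ix; rewrite rmorphM; apply: (mem_idealMl II).
  have /(Pmax _ IfI) [IP|] : forall x, P x -> I (f x).
    by move=> x; rewrite -{1}[x]fK; apply: PI.
    by left => x Ix; apply: IP; rewrite gK.
  by rewrite rmorph1; right.
Qed.

Section Module.
Variables (R : comNzRingType) (sigma sigmai : R -> R) (H J : R -> Prop).
Variables (M : zmodType) (act : int -> R -> M -> M).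
Hypothesis Hmod : is_BR_module sigma sigmai H J act.
Local Notation Ip := (Ipow sigma sigmai H J).
Local Notation spow := (spow sigma sigmai).
Local Notation wsp := (wsp act).
Local Notation has_basis := (has_basis act).

Lemma actDv n r v w : Ip n r -> act n r (v + w) = act n r v + act n r w.
Proof. by case: Hmod => + _ _ _; apply. Qed.

Lemma actDr n r s v : Ip n r -> Ip n s -> act n (r + s) v = act n r v + act n s v.
Proof. by case: Hmod => _ + _ _; apply. Qed.

Lemma scal1r v : act 0 1 v = v.
Proof. by case: Hmod. Qed.

Lemma actA n l r s v : Ip n r -> Ip l s ->
  act n r (act l s v) = act (n + l) (r * spow n s) v.
Proof. by case: Hmod => _ _ _; apply. Qed.

Lemma scalA r s v : act 0 r (act 0 s v) = act 0 (r * s) v.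
Proof. exact: (@actA 0 0). Qed.

Lemma actv0 n r : Ip n r -> act n r 0 = 0.
Proof. by move=> Ir; apply: (addIr (act n r 0)); rewrite -actDv ?add0r. Qed.

Lemma scal0r v : act 0 0 v = 0.
Proof. by apply: (addIr (act 0 0 v)); rewrite -actDr ?add0r. Qed.

Lemma actBv n r v w : Ip n r -> act n r (v - w) = act n r v - act n r w.
Proof.
move=> Ir; apply: (addIr (act n r w)).
by rewrite -actDv // !subrK.
Qed.

Lemma act_sumv n r (I : Type) (s : seq I) (F : I -> M) : Ip n r ->
  act n r (\sum_(i <- s) F i) = \sum_(i <- s) act n r (F i).
Proof.
move=> Ir; elim: s => [|a s IH]; first by rewrite !big_nil actv0.
by rewrite !big_cons actDv // IH.
Qed.

Lemma scal_suml (I : Type) (s : seq I) (F : I -> R) v :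
  act 0 (\sum_(i <- s) F i) v = \sum_(i <- s) act 0 (F i) v.
Proof.
elim: s => [|a s IH]; first by rewrite !big_nil scal0r.
by rewrite !big_cons actDr // IH.
Qed.

Lemma wspB (P : R -> Prop) v w : wsp P v -> wsp P w -> wsp P (v - w).
Proof. by move=> Pv Pw r Pr; rewrite actBv // Pv // Pw // subrr. Qed.

Lemma wsp_scal_sum (P : R -> Prop) k (b : 'I_k -> M) (c : 'I_k -> R) :
  (forall i, wsp P (b i)) -> wsp P (\sum_(i < k) act 0 (c i) (b i)).
Proof.
move=> Pb r Pr; rewrite act_sumv //; apply: big1 => i _.
by rewrite scalA mulrC -scalA Pb // actv0.
Qed.

(* An element outside the maximal ideal P is invertible modulo P. *)
Lemma wsp_scal_eq0 (P : R -> Prop) c v : is_max_ideal P -> ~ P c -> wsp P v ->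
  act 0 c v = 0 -> v = 0.
Proof.
move=> HP Pc Pv cv0; have [p [r [Pp e]]] := max_ideal_inv HP Pc.
by rewrite -[v]scal1r e actDr // -scalA cv0 actv0 // Pv // add0r.
Qed.

Lemma has_basis_indep_le (P : R -> Prop) n n' (u : 'I_n -> M) : is_max_ideal P ->
  (forall i, wsp P (u i)) ->
  (forall c : 'I_n -> R, \sum_(i < n) act 0 (c i) (u i) = 0 -> forall i, P (c i)) ->
  has_basis P n' -> (n <= n')%N.
Proof.
move=> HP Pu u_indep [b [Pb b_span _]].
rewrite leqNgt; apply/negP => n'n.
have [A uA] : exists A : 'I_n -> 'I_n' -> R,
    forall i, u i = \sum_(k < n') act 0 (A i k) (b k).
  exact: (fin_all_exists (fun i => b_span _ (Pu i))).
pose A' i k := oapp (A i) 0 (insub k).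
have sz : (n' < size (index_enum 'I_n))%N.
  by rewrite [index_enum _]unlock -enumT size_enum_ord.
have [c [[i _ Pci] Pc]] :=
  max_ideal_nontrivial_solution HP A' (index_enum_uniq _) sz.
apply: Pci; apply: u_indep.
transitivity (\sum_(i < n) \sum_(k < n') act 0 (c i * A i k) (b k)).
  by apply: eq_bigr => j _; rewrite uA act_sumv //; apply: eq_bigr => k _; rewrite scalA.
rewrite exchange_big /=; apply: big1 => k _.
rewrite -scal_suml; apply: Pb.
by have := Pc k (ltn_ord k); rewrite /A' valK.
Qed.

Lemma scal_act_comm k r x y v : Ip k r -> spow k y = x ->
  act 0 x (act k r v) = act k r (act 0 y v).
Proof. by move=> Ir <-; rewrite (@actA 0 k) // (@actA k 0) // add0r addr0 mulrC. Qed.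

Lemma wsp_act (P Q : R -> Prop) k r (tau : R -> R) v : Ip k r ->
  (forall x, spow k (tau x) = x) -> (forall x, Q x -> P (tau x)) ->
  wsp P v -> wsp Q (act k r v).
Proof.
move=> Ir tauK QP Pv x Qx.
by rewrite (scal_act_comm _ Ir (tauK x)) Pv ?actv0 //; apply: QP.
Qed.

(* (s t^l)(r t^k) = s sigma^l(r) is a scalar outside P, hence injective on M_P. *)
Lemma wsp_act_eq0 (P : R -> Prop) k l r s d : is_max_ideal P ->
  Ip k r -> Ip l s -> l + k = 0 -> ~ P (s * spow l r) ->
  wsp P d -> act k r d = 0 -> d = 0.
Proof.
move=> HP Ir Is lk0 Psr Pd rd0; apply: (wsp_scal_eq0 HP Psr Pd).
by rewrite -lk0 -actA // rd0 actv0.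
Qed.

Lemma wsp_act_inj (P : R -> Prop) k r :
  Ip k r -> (forall d, wsp P d -> act k r d = 0 -> d = 0) ->
  forall v w, wsp P v -> wsp P w -> act k r v = act k r w -> v = w.
Proof.
move=> Ir r_ker v w Pv Pw rvw; apply/eqP; rewrite -subr_eq0; apply/eqP.
by apply: r_ker; [exact: wspB | rewrite actBv // rvw subrr].
Qed.

Lemma has_basis_le_act (P Q : R -> Prop) k r (tau : R -> R) n n' :
  is_max_ideal Q -> Ip k r ->
  (forall x, spow k (tau x) = x) -> (forall x, Q x <-> P (tau x)) ->
  (forall d, wsp P d -> act k r d = 0 -> d = 0) ->
  has_basis P n -> has_basis Q n' -> (n <= n')%N.
Proof.
move=> HQ Ir tauK QP r_ker [b [Pb _ b_indep]].
apply: (has_basis_indep_le (u := fun i => act k r (b i)) HQ).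
  by move=> i; apply: (wsp_act Ir tauK) => // x /QP.
move=> c rbc0 i; apply/QP; apply: (b_indep (fun i => tau (c i))).
apply: r_ker; first exact: wsp_scal_sum.
rewrite act_sumv // -[RHS]rbc0; apply: eq_bigr => j _.
by rewrite (scal_act_comm _ Ir (tauK _)).
Qed.

End Module.

Section WeightSpaceShift.
Variables (R : comNzRingType) (sigma : {rmorphism R -> R}) (sigmai : R -> R).
Hypotheses (sigmaK : cancel sigma sigmai) (sigmaiK : cancel sigmai sigma).
Variables (H J : R -> Prop) (M : zmodType) (act : int -> R -> M -> M).
Hypothesis Hmod : is_BR_module sigma sigmai H J act.
Variable m : R -> Prop.
Hypothesis Hm : is_max_ideal m.
Local Notation Ip := (Ipow sigma sigmai H J).
Local Notation sm := (imgp sigma sigmai 1 m).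

Lemma Ipow1 j : J j -> Ip 1 j.
Proof. by []. Qed.

Lemma IpowN1 h : H h -> Ip (-1) (sigmai h).
Proof. by move=> Hh; change (H (sigma (sigmai h))); rewrite sigmaiK. Qed.

Lemma max_ideal_shift : is_max_ideal sm.
Proof. exact: max_ideal_preim sigmaK sigmaiK Hm. Qed.

Lemma act_J_eq0 j h : J j -> H h -> ~ sm (h * j) ->
  forall d, wsp act m d -> act 1 j d = 0 -> d = 0.
Proof.
move=> Jj Hh smhj d; apply: (wsp_act_eq0 Hmod Hm (Ipow1 Jj) (IpowN1 Hh)) => //.
have -> : sigmai h * sigmai j = sigmai (h * j).
  by apply: (can_inj sigmaK); rewrite rmorphM !sigmaiK.
exact: smhj.
Qed.

Lemma act_H_eq0 j h : J j -> H h -> ~ sm (h * j) ->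
  forall d, wsp act sm d -> act (-1) (sigmai h) d = 0 -> d = 0.
Proof.
move=> Jj Hh smhj d; apply: (wsp_act_eq0 Hmod max_ideal_shift (IpowN1 Hh) (Ipow1 Jj)) => //.
by rewrite /= sigmaiK mulrC.
Qed.

Lemma act_J_inj j h : J j -> H h -> ~ sm (h * j) ->
  forall v w, wsp act m v -> wsp act m w -> act 1 j v = act 1 j w -> v = w.
Proof.
by move=> Jj Hh smhj; apply: (wsp_act_inj Hmod (Ipow1 Jj) (act_J_eq0 Jj Hh smhj)).
Qed.

Lemma act_H_inj j h : J j -> H h -> ~ sm (h * j) ->
  forall v w, wsp act sm v -> wsp act sm w ->
    act (-1) (sigmai h) v = act (-1) (sigmai h) w -> v = w.
Proof.
by move=> Jj Hh smhj; apply: (wsp_act_inj Hmod (IpowN1 Hh) (act_H_eq0 Jj Hh smhj)).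
Qed.

Lemma has_basis_le_shift j h n n' : J j -> H h -> ~ sm (h * j) ->
  has_basis act m n -> has_basis act sm n' -> (n <= n')%N.
Proof.
move=> Jj Hh smhj; apply: (has_basis_le_act Hmod max_ideal_shift (Ipow1 Jj) sigmaiK).
  by move=> x; apply: iff_refl.
exact: (act_J_eq0 Jj Hh smhj).
Qed.

Lemma has_basis_ge_shift j h n n' : J j -> H h -> ~ sm (h * j) ->
  has_basis act m n -> has_basis act sm n' -> (n' <= n)%N.
Proof.
move=> Jj Hh smhj Bm Bsm.
apply: (has_basis_le_act Hmod Hm (IpowN1 Hh) sigmaK _ _ Bsm Bm).
  by move=> x; rewrite /imgp /= sigmaK.
exact: (act_H_eq0 Jj Hh smhj).
Qed.

End WeightSpaceShift.

Theorem proposition3p1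
  (R : idomainType) (sigma : {rmorphism R -> R}) (sigmai : R -> R)
  (Hsig1 : cancel sigma sigmai) (Hsig2 : cancel sigmai sigma)
  (H J : R -> Prop) (HH : is_ideal H) (HJ : is_ideal J)
  (Hnz : forall n : int, exists x, Ipow sigma sigmai H J n x /\ x != 0)
  (M : zmodType) (act : int -> R -> M -> M)
  (Hmod : is_BR_module sigma sigmai H J act)
  (Hw : weight_module act)
  (m : R -> Prop) (Hm : is_max_ideal m)
  (HS : ~ inSB H J (imgp sigma sigmai 1 m)) :
  (forall j h, J j -> ~ imgp sigma sigmai 1 m j ->
               H h -> ~ imgp sigma sigmai 1 m h ->
     (forall v w, wsp act m v -> wsp act m w ->
        act 1 j v = act 1 j w -> v = w) /\
     (forall v w, wsp act (imgp sigma sigmai 1 m) v -> wsp act (imgp sigma sigmai 1 m) w ->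
        act (-1) (sigmai h) v = act (-1) (sigmai h) w -> v = w)) /\
  (exists n, has_basis act m n /\ has_basis act (imgp sigma sigmai 1 m) n).
Proof.
set sm := imgp sigma sigmai 1 m.
have Hsm : is_max_ideal sm := max_ideal_shift Hsig1 Hsig2 Hm.
split.
  move=> j h Jj smj Hh smh.
  have smhj : ~ sm (h * j) by case/(max_ideal_prime Hsm).
  split; [exact: (act_J_inj Hsig1 Hsig2 Hmod Hm Jj Hh smhj)
         | exact: (act_H_inj Hsig1 Hsig2 Hmod Hm Jj Hh smhj)].
have [h [j [Hh Jj smhj]]] := max_ideal_not_inSB Hsm HS.
case: Hw => _ _ fin_dim.
have [n Bm] := fin_dim m Hm; have [n' Bsm] := fin_dim sm Hsm.
exists n; split => //; suff -> : n = n' by [].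
apply/eqP; rewrite eqn_leq (has_basis_le_shift Hsig1 Hsig2 Hmod Hm Jj Hh smhj Bm Bsm).
by rewrite (has_basis_ge_shift Hsig1 Hsig2 Hmod Hm Jj Hh smhj Bm Bsm).
Qed.
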